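(* If $\dot G\in\mathcal C_1\cup\mathcal C_4\cup\mathcal C_5$ is a connected, non-complete, $5$-regular and $1$ net-regular SRSG with parameters $(n,5,a,b,c)$, then $(a,b)\neq(0,2)$ and $(a,b)\neq(-2,0)$.
   Context: A signed graph $\dot G=(G,\sigma)$ is a simple graph $G$ with $\sigma:E(G)\to\{\pm1\}$; adjacency matrix $A_{\dot G}$ has entries $\sigma(v_iv_j)$ for adjacent vertices and $0$ otherwise. Degree and connectedness refer to $G$; net-degree is $d^+(v)-d^-(v)$; $\rho$ net-regular means all net-degrees equal $\rho$. $\dot G$ on $n$ vertices is an SRSG if it is neither homogeneous complete nor edgeless and there are $r\in\mathbb N$, $a,b,c\in\mathbb Z$ with $(A^2_{\dot G})_{ii}=r$, $(A^2_{\dot G})_{ij}=a$ for positive edges, $b$ for negative edges, $c$ for distinct non-adjacent pairs; parameters $(n,r,a,b,c)$. Classes: $\mathcal C_1$: $a=-b$ and (complete, or non-complete with $c\neq0$); $\mathcal C_4$: $a\ne-b$, non-complete, $c=0$; $\mathcal C_5$: $a\neq-b$, non-complete, $c\notin\{0,\frac{a+b}{2}\}$. *)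

From mathcomp Require Import all_boot all_order all_algebra.
Set Implicit Arguments. Unset Strict Implicit. Unset Printing Implicit Defensive.
Import Order.TTheory GRing.Theory Num.Theory.
Local Open Scope ring_scope.

(* A signed graph on the finite vertex type T: a simple graph given by the
   adjacency relation [e] (symmetric, irreflexive) and a signature [s]
   ([s x y = true] means the edge xy is positive, [false] negative). *)
Definition signed_graph (T : finType) (e : rel T) (s : T -> T -> bool) : Prop :=
  symmetric e /\ irreflexive e /\ (forall x y, e x y -> s x y = s y x).

Definition sadj (T : finType) (e : rel T) (s : T -> T -> bool) (x y : T) : int :=
  if e x y then (if s x y then 1 else -1) else 0.

Definition sadj2 (T : finType) (e : rel T) (s : T -> T -> bool) (x y : T) : int :=
  \sum_(z : T) sadj e s x z * sadj e s z y.

Definition sg_complete (T : finType) (e : rel T) : Prop :=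
  forall x y, x != y -> e x y.

Definition sg_edgeless (T : finType) (e : rel T) : Prop :=
  forall x y, ~~ e x y.

Definition sg_homogeneous_complete (T : finType) (e : rel T) (s : T -> T -> bool) : Prop :=
  sg_complete e /\
  ((forall x y, e x y -> s x y = true) \/ (forall x y, e x y -> s x y = false)).

Definition sg_connected (T : finType) (e : rel T) : Prop :=
  forall x y, connect e x y.

Definition sdegree (T : finType) (e : rel T) (x : T) : nat := #|[set y | e x y]|.

Definition net_degree (T : finType) (e : rel T) (s : T -> T -> bool) (x : T) : int :=
  (#|[set y | e x y && s x y]|)%:Z - (#|[set y | e x y && ~~ s x y]|)%:Z.

Definition SRSG (T : finType) (e : rel T) (s : T -> T -> bool)
    (n r : nat) (a b c : int) : Prop :=
  #|T| = n /\
  ~ sg_homogeneous_complete e s /\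
  ~ sg_edgeless e /\
  (forall x, sadj2 e s x x = r%:Z) /\
  (forall x y, e x y -> s x y -> sadj2 e s x y = a) /\
  (forall x y, e x y -> ~~ s x y -> sadj2 e s x y = b) /\
  (forall x y, x != y -> ~~ e x y -> sadj2 e s x y = c).

Definition class_C1 (T : finType) (e : rel T) (a b c : int) : Prop :=
  a = - b /\ (sg_complete e \/ (~ sg_complete e /\ c <> 0)).

Definition class_C4 (T : finType) (e : rel T) (a b c : int) : Prop :=
  a <> - b /\ ~ sg_complete e /\ c = 0.

(* c notin {0, (a+b)/2}; the second condition is written 2c <> a+b *)
Definition class_C5 (T : finType) (e : rel T) (a b c : int) : Prop :=
  a <> - b /\ ~ sg_complete e /\ c <> 0 /\ c *+ 2 <> a + b.

From mathcomp Require Import all_boot all_order all_algebra zify ring.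
Import Order.TTheory GRing.Theory Num.Theory.
Local Open Scope ring_scope.

(* Each vertex has 3 positive and 2 negative neighbours, so the all-ones vector
   is an eigenvector of A with eigenvalue 1, hence of A^2 with eigenvalue 1;
   comparing with the SRSG row sums gives c (n - 6) = -4 - 3a - 2b.
   For (a, b) = (0, 2): tr A^3 = -4n, and tr A^3 counts every signed triangle
   three times, so 3 | n and then 3 | c (n - 6) = -8.
   For (a, b) = (-2, 0): c (n - 6) = 2 forces (n, c) = (7, 2) or (8, 1).  Since
   (A^2)_xy has the parity of the number of common neighbours, and non-adjacent
   vertices share at least 12 - n of their 5 neighbours, n = 7 is impossible,
   and n = 8 makes non-adjacent vertices twins; then non-adjacency is an
   equivalence relation with classes of size 3, contradicting 3 | 8. *)

Lemma unique_min3 (i j k : nat) : i != j -> j != k -> k != i ->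
  (((i < j) && (i < k)) + ((j < k) && (j < i)) + ((k < i) && (k < j)) = 1)%N.
Proof.
move=> /eqP ? /eqP ? /eqP ?.
by case: (ltnP i j); case: (ltnP i k); case: (ltnP j k); case: (ltnP j i);
   case: (ltnP k i); case: (ltnP k j) => //=; lia.
Qed.

Lemma eq2_factor_cases (m : nat) (c : int) : (5 < m)%N -> c * (m%:R - 6) = 2 ->
  (m = 7 /\ c = 2) \/ (m = 8 /\ c = 1).
Proof.
rewrite natz => m6 c_rel.
have : (m = 6 \/ m = 7 \/ m = 8 \/ 8 < m)%N by lia.
case=> [E|[E|[E|m9]]]; rewrite ?E in c_rel *; try lia.
by have [c_le0|c_ge1] : c <= 0 \/ 1 <= c; [lia | nia | nia].
Qed.

Lemma sum_rot3 (T : finType) (f : T -> T -> T -> int) :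
  \sum_x \sum_y \sum_z f y z x = \sum_x \sum_y \sum_z f x y z.
Proof. by rewrite exchange_big; apply: eq_bigr => y _; rewrite exchange_big. Qed.

Lemma dvdz_sum_cyclic3 (T : finType) (f : T -> T -> T -> int) :
  (forall x y z, f x y z = f y z x) ->
  (forall x y z, f x y z != 0 -> [/\ x != y, y != z & z != x]) ->
  (3 %| \sum_x \sum_y \sum_z f x y z)%Z.
Proof.
move=> f_rot f_distinct.
pose rk (x : T) := nat_of_ord (enum_rank x).
have rk_inj u v : u != v -> rk u != rk v.
  by apply: contra => /eqP /val_inj /enum_rank_inj ->.
(* keep each cyclic class of triples only in its rotation starting at the least rank *)
pose g x y z := f x y z * ((rk x < rk y) && (rk x < rk z))%N%:R.
have f_split x y z : f x y z = g x y z + g y z x + g z x y.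
  rewrite /g -(f_rot x y z) (f_rot z x y).
  have [->|/f_distinct[nxy nyz nzx]] := eqVneq (f x y z) 0; first by rewrite !mul0r !addr0.
  by rewrite -!mulrDr -!natrD unique_min3 ?rk_inj // mulr1.
have -> : \sum_x \sum_y \sum_z f x y z =
    \sum_x \sum_y \sum_z g x y z + \sum_x \sum_y \sum_z g y z x
  + \sum_x \sum_y \sum_z g z x y.
  rewrite -!big_split; apply: eq_bigr => x _; rewrite -!big_split.
  by apply: eq_bigr => y _; rewrite -!big_split; apply: eq_bigr => z _.
rewrite (@sum_rot3 _ (fun x y z => g y z x)) (@sum_rot3 _ g).
set S := \sum_x _; apply/dvdzP; exists S; lia.
Qed.

Lemma sum_indicator (T : finType) (P : pred T) :
  \sum_y (P y)%:R = #|[set y | P y]|%:R :> int.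
Proof.
rewrite (eq_bigr (fun y => if P y then 1 else 0)); last by move=> y _; case: (P y).
by rewrite -big_mkcond sumr_const cardsE.
Qed.

(* [sumr_const] yields [#|xpredT|], which [lia] does not identify with [#|T|]. *)
Lemma sumr_const_card (T : finType) (R : pzSemiRingType) (x : R) :
  \sum_(y : T) x = x * #|T|%:R.
Proof. by rewrite sumr_const mulr_natr. Qed.

Section SignedGraph.

Context {T : finType} {e : rel T} {s : T -> T -> bool}.
Hypotheses (sym_e : symmetric e) (irr_e : irreflexive e)
  (sym_s : forall x y, e x y -> s x y = s y x).

Local Notation A := (sadj e s).
Local Notation A2 := (sadj2 e s).
Local Notation pos x := [set y | e x y && s x y].
Local Notation neg x := [set y | e x y && ~~ s x y].
Local Notation common x y := [set z | e x z && e z y].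

Lemma sadj_sym x y : A x y = A y x.
Proof. by rewrite /sadj sym_e; case: ifP => // /sym_s ->. Qed.

Lemma sadj_id x : A x x = 0.
Proof. by rewrite /sadj irr_e. Qed.

Lemma sadj2_sym x y : A2 x y = A2 y x.
Proof. by apply: eq_bigr => z _; rewrite mulrC (sadj_sym z y) (sadj_sym x z). Qed.

Lemma sadj2_diag x : A2 x x = (sdegree e x)%:R.
Proof.
rewrite /sadj2 /sdegree -sum_indicator; apply: eq_bigr => z _.
by rewrite (sadj_sym z x) /sadj; case: (e x z); case: (s x z).
Qed.

Lemma sdegreeE x : sdegree e x = (#|pos x| + #|neg x|)%N.
Proof.
rewrite /sdegree -(cardsID [set y | s x y]).
by congr (_ + _)%N; apply: eq_card => y; rewrite !inE andbC.
Qed.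

Lemma sum_sadj x : \sum_y A x y = net_degree e s x.
Proof.
rewrite (eq_bigr (fun y => (e x y && s x y)%:R - (e x y && ~~ s x y)%:R)).
  by rewrite sumrB !sum_indicator !natz.
by move=> y _; rewrite /sadj; case: (e x y); case: (s x y).
Qed.

Lemma sum_sadj2 x : \sum_y A2 x y = \sum_z A x z * net_degree e s z.
Proof.
rewrite exchange_big; apply: eq_bigr => z _.
by rewrite -mulr_sumr sum_sadj.
Qed.

(* a path x z y contributes +1 if its two edges have equal signs, -1 otherwise *)
Lemma sadj2_common x y :
  A2 x y = #|common x y|%:R - 2 * #|[set z | e x z && e z y && (s x z != s z y)]|%:R.
Proof.
rewrite -!sum_indicator mulr_sumr -sumrB; apply: eq_bigr => z _; rewrite /sadj.
by case: (e x z); case: (e z y); case: (s x z); case: (s z y).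
Qed.

Lemma sum_triangles_sadj2 :
  \sum_x \sum_y \sum_z A x y * A y z * A z x = \sum_x \sum_y A x y * A2 y x.
Proof.
apply: eq_bigr => x _; apply: eq_bigr => y _.
by rewrite /sadj2 mulr_sumr; apply: eq_bigr => z _; rewrite mulrA.
Qed.

Lemma dvdz_sum_triangles : (3 %| \sum_x \sum_y \sum_z A x y * A y z * A z x)%Z.
Proof.
apply: dvdz_sum_cyclic3 => [x y z|x y z]; first by rewrite [RHS]mulrC mulrA.
have [->|nxy] := eqVneq x y; first by rewrite sadj_id !mul0r eqxx.
have [->|nyz] := eqVneq y z; first by rewrite sadj_id mulr0 mul0r eqxx.
by have [->|nzx] := eqVneq z x; first by rewrite sadj_id mulr0 eqxx.
Qed.

Lemma sdegree_lt_card x : (sdegree e x < #|T|)%N.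
Proof.
have : (sdegree e x <= #|[set~ x]|)%N.
  apply: subset_leq_card; apply/subsetP => y.
  by rewrite !inE; apply: contraL => /eqP ->; rewrite irr_e.
have : (0 < #|T|)%N by apply/card_gt0P; exists x.
rewrite cardsC1; lia.
Qed.

Lemma card_common_nbrs x y : x != y -> ~~ e x y ->
  (sdegree e x + sdegree e y + 2 <= #|T| + #|common x y|)%N.
Proof.
move=> nxy nexy.
have -> : common x y = [set z | e x z] :&: [set z | e y z].
  by apply/setP => z; rewrite !inE (sym_e z y).
rewrite /sdegree -cardsUI.
have : (#|[set z | e x z] :|: [set z | e y z]| <= #|[set~ x] :\ y|)%N.
  apply: subset_leq_card; apply/subsetP => z; rewrite !inE.
  by case/orP => E; apply/andP; split; apply: contraTneq E => ->;
    rewrite ?irr_e // sym_e (negbTE nexy).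
have := cardsD1 y [set~ x]; rewrite cardsC1 !inE eq_sym nxy.
have : (0 < #|T|)%N by apply/card_gt0P; exists x.
lia.
Qed.

(* When non-adjacent vertices are twins, non-adjacency is an equivalence
   relation whose classes all have #|T| - d elements. *)
Lemma dvdn_card_nonadj_twins d :
  (forall x, sdegree e x = d) ->
  (forall x y, x != y -> ~~ e x y -> e x =1 e y) ->
  (#|T| - d %| #|T|)%N.
Proof.
move=> deg_d twins.
pose R := [rel x y | ~~ e x y].
have R_equiv : {in [set: T] & &, equivalence_rel R}.
  move=> x y z _ _ _; split; first by rewrite /= irr_e.
  by have [<-|nxy] := eqVneq x y; last by move=> /= /(twins _ _ nxy) ->.
have block_card :
    {in equivalence_partition R [set: T], forall B : {set T}, #|B| = #|T| - d}%N.
  move=> _ /imsetP[x _ ->].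
  rewrite -(deg_d x) /sdegree -(cardsC [set y | e x y]) addKn.
  by apply: eq_card => y; rewrite !inE.
have := card_uniform_partition block_card (equivalence_partitionP R_equiv).
by rewrite cardsT => cardT; rewrite {2}cardT dvdn_mull.
Qed.

Section SRSG.

Context {r : nat} {a b c : int}.
Hypotheses (diag_r : forall x, A2 x x = r%:Z)
  (pos_a : forall x y, e x y -> s x y -> A2 x y = a)
  (neg_b : forall x y, e x y -> ~~ s x y -> A2 x y = b)
  (nonadj_c : forall x y, x != y -> ~~ e x y -> A2 x y = c).

Lemma sum_sadj2_SRSG x : \sum_y A2 x y =
  r%:Z + a * #|pos x|%:R + b * #|neg x|%:R + c * (#|T|%:R - 1 - (sdegree e x)%:R).
Proof.
rewrite (eq_bigr (fun y => c + (r%:Z - c) * (y == x)%:R + (a - c) * (e x y && s x y)%:R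
                       + (b - c) * (e x y && ~~ s x y)%:R)); last first.
  move=> y _; have [->|nyx] := eqVneq y x; first by rewrite irr_e diag_r /=; lia.
  case Exy: (e x y); last by rewrite nonadj_c ?Exy // 1?eq_sym //=; lia.
  by case Sxy: (s x y) => /=; [rewrite pos_a | rewrite neg_b ?Sxy]; rewrite //=; lia.
rewrite !big_split /= sumr_const_card -!mulr_sumr !sum_indicator sdegreeE natrD.
have -> : [set y | y == x] = [set x] by apply/setP => y; rewrite !inE.
rewrite cards1; ring.
Qed.

Lemma sum_triangles_SRSG :
  \sum_x \sum_y \sum_z A x y * A y z * A z x =
  \sum_x (a * #|pos x|%:R - b * #|neg x|%:R).
Proof.
rewrite sum_triangles_sadj2; apply: eq_bigr => x _.
rewrite -!sum_indicator !mulr_sumr -sumrB; apply: eq_bigr => y _.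
rewrite sadj2_sym /sadj; case Exy: (e x y) => /=; last by rewrite mul0r; lia.
by case Sxy: (s x y) => /=; [rewrite pos_a | rewrite neg_b ?Sxy]; rewrite //=; lia.
Qed.

Section FiveRegular.

Hypotheses (not_complete : ~ sg_complete e) (deg5 : forall x, sdegree e x = 5%N)
  (net1 : forall x, net_degree e s x = 1).

Lemma exists_nonadj_pair : exists x y, x != y /\ ~~ e x y.
Proof.
case: (pickP (fun xy : T * T => (xy.1 != xy.2) && ~~ e xy.1 xy.2)).
  by move=> [x y] /andP[]; exists x, y.
move=> all_adj.
exfalso; apply: not_complete => x y nxy.
by move: (all_adj (x, y)); rewrite /= nxy => /negbFE.
Qed.

Lemma card_pos_neg_nbrs (x : T) : #|pos x| = 3%N /\ #|neg x| = 2%N.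
Proof. by have := sdegreeE x; have := net1 x; rewrite deg5 /net_degree; lia. Qed.

Lemma row_sum_relation (x : T) : c * (#|T|%:R - 6) = -4 - 3 * a - 2 * b.
Proof.
have row1 : \sum_y A2 x y = 1.
  by rewrite sum_sadj2; under eq_bigr do rewrite net1 mulr1; rewrite sum_sadj net1.
have [p3 n2] := card_pos_neg_nbrs x.
move: row1; rewrite sum_sadj2_SRSG p3 n2 deg5.
have := diag_r x; rewrite sadj2_diag deg5; lia.
Qed.

Lemma params_not_0_2 : (a, b) <> (0, 2).
Proof.
case=> a0 b2; have [x _] := exists_nonadj_pair.
have triangles : \sum_y (a * #|pos y|%:R - b * #|neg y|%:R) = -4 * #|T|%:R.
  rewrite -sumr_const_card; apply: eq_bigr => y _.
  by have [-> ->] := card_pos_neg_nbrs y; rewrite a0 b2.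
have := dvdz_sum_triangles; rewrite sum_triangles_SRSG triangles.
by have := row_sum_relation x; rewrite a0 b2; lia.
Qed.

Lemma nonadj_common_nbrs x y : x != y -> ~~ e x y ->
  [/\ (12 <= #|T| + #|common x y|)%N, (#|common x y| <= 5)%N
    & exists k : int, c = #|common x y|%:R - 2 * k].
Proof.
move=> nxy nexy; split.
- by have := card_common_nbrs x y nxy nexy; rewrite !deg5.
- rewrite -(deg5 x); apply: subset_leq_card; apply/subsetP => z.
  by rewrite !inE => /andP[].
- by eexists; rewrite -(nonadj_c x y nxy nexy) sadj2_common.
Qed.

Lemma common_nbrs5_twins x y : x != y -> ~~ e x y -> #|common x y| = 5%N ->
  e x =1 e y.
Proof.
move=> nxy nexy common5.
have /eqP Nx : common x y == [set z | e x z].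
  rewrite eqEcard common5 -(deg5 x) leqnn andbT.
  by apply/subsetP => z; rewrite !inE => /andP[].
have /eqP Ny : common x y == [set z | e y z].
  rewrite eqEcard common5 -(deg5 y) leqnn andbT.
  by apply/subsetP => z; rewrite !inE => /andP[_]; rewrite sym_e.
by move=> z; have /setP/(_ z) := etrans (esym Nx) Ny; rewrite !inE.
Qed.

Lemma params_not_m2_0 : (a, b) <> (-2, 0).
Proof.
case=> a_m2 b0; have [x0 [y0 [nxy0 nexy0]]] := exists_nonadj_pair.
have c_rel := row_sum_relation x0; rewrite a_m2 b0 in c_rel.
have := sdegree_lt_card x0; rewrite deg5 => T6.
have [[T7 c2]|[T8 c1]] : (#|T| = 7 /\ c = 2) \/ (#|T| = 8 /\ c = 1).
  exact: eq2_factor_cases.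
- by have [+ + [k]] := nonadj_common_nbrs x0 y0 nxy0 nexy0; rewrite T7 c2; lia.
- suff : (#|T| - 5 %| #|T|)%N by rewrite T8.
  apply: dvdn_card_nonadj_twins deg5 _ => x y nxy nexy.
  apply: common_nbrs5_twins => //.
  by have [+ + [k]] := nonadj_common_nbrs x y nxy nexy; rewrite T8 c1; lia.
Qed.

End FiveRegular.

End SRSG.

End SignedGraph.

Theorem lemma3p8 (T : finType) (e : rel T) (s : T -> T -> bool)
    (n : nat) (a b c : int) :
  signed_graph e s ->
  SRSG e s n 5 a b c ->
  (class_C1 e a b c \/ class_C4 e a b c \/ class_C5 e a b c) ->
  sg_connected e ->
  ~ sg_complete e ->
  (forall x, sdegree e x = 5%N) ->
  (forall x, net_degree e s x = 1) ->
  (a, b) <> (0, 2) /\ (a, b) <> (-2, 0).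
Proof.
move=> [sym_e [irr_e sym_s]] [_ [_ [_ [diag5 [pos_a [neg_b nonadj_c]]]]]] _ _
  not_complete deg5 net1.
split.
- exact: (params_not_0_2 sym_e irr_e sym_s diag5 pos_a neg_b nonadj_c
            not_complete deg5 net1).
- exact: (params_not_m2_0 sym_e irr_e sym_s diag5 pos_a neg_b nonadj_c
            not_complete deg5 net1).
Qed.
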